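(* Let $G=(V,E)$ be a simple undirected graph with vertex set $V$ and edge set $E$, let $A$ be its vertex-edge incidence matrix, and let $k>4$ be an integer. Suppose every connected component of $G$ has at least four vertices, $|E| = \binom{k}{2}$, and $\operatorname{rank}(A) = k$. Then $G$ has exactly $|V| = k$ vertices.
   Context: The vertex-edge incidence matrix $A$ of $G$ has rows indexed by $V$ and columns indexed by $E$, with entry $a_{ie} = 1$ if vertex $i$ is an endpoint of edge $e$ and $0$ otherwise; its rank is taken over the real (equivalently rational) numbers. *)

From HB Require Import structures.
From mathcomp Require Import all_boot all_order all_algebra.
Set Implicit Arguments. Unset Strict Implicit. Unset Printing Implicit Defensive.
Import GRing.Theory Num.Theory.

(* A simple undirected graph on a finite vertex type V is given by a
   symmetric irreflexive adjacency relation e : rel V. *)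

Definition edges (V : finType) (e : rel V) : {set {set V}} :=
  [set E : {set V} | [exists x : V, exists y : V, e x y && (E == [set x; y])]].

Definition incidence (V : finType) (e : rel V) : 'M[rat]_(#|V|, #|edges e|) :=
  \matrix_(i < #|V|, j < #|edges e|)
     (if enum_val i \in (enum_val j : {set V}) then 1%R else 0%R).

Definition component (V : finType) (e : rel V) (v : V) : {set V} :=
  [set w | connect e v w].

(* A row vector u with u A = 0 satisfies u_y = -u_x along every edge xy, so on each
   connected component it is either zero or nowhere zero with alternating signs; in the
   latter case the component is bipartite.  Hence |V| - k = dim ker A is at most the
   number s of bipartite components.  Writing m_C for the component sizes, twice the
   number of edges of C is at most m_C (m_C - 1), and at most m_C^2 / 2 when C is
   bipartite.  Since k <= sum m_C <= k + s, comparing with 2|E| = k (k - 1) and using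
   m_C >= 4 leaves room for only one component, of size k. *)

From mathcomp Require Import all_boot all_order all_algebra.
From mathcomp Require Import zify.
Set Implicit Arguments. Unset Strict Implicit. Unset Printing Implicit Defensive.
Import Order.TTheory GRing.Theory Num.Theory.

Lemma mulnB1D p q :
  (p + q) * (p + q - 1) = p * (p - 1) + q * (q - 1) + 2 * (p * q).
Proof. nia. Qed.

Lemma sum_mulnB1_le (I : eqType) (l : seq I) (a : I -> nat) :
  (forall i, i \in l -> 3 <= a i) ->
  \sum_(i <- l) a i * (a i - 1) + 18 * (size l - 1)
    <= (\sum_(i <- l) a i) * (\sum_(i <- l) a i - 1).
Proof.
elim: l => [|x l IHl] a_ge3; first by rewrite !big_nil.
have ax : 3 <= a x by apply: a_ge3; rewrite mem_head.
have al : forall i, i \in l -> 3 <= a i.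
  by move=> i il; apply: a_ge3; rewrite inE il orbT.
have cross : 18 * size l <= 18 * (size l - 1) + 2 * (a x * \sum_(i <- l) a i).
  case: l al {IHl a_ge3} => [|y l] al; first by rewrite big_nil muln0.
  have ay : 3 <= a y by apply: al; rewrite mem_head.
  rewrite big_cons /=; nia.
have := IHl al; rewrite !big_cons mulnB1D /=; lia.
Qed.

Lemma bipartite_shift_bound m g (s : bool) :
  4 <= m -> g <= m * (m - 1) -> (s -> 2 * g <= m ^ 2) ->
  g <= (m - s) * (m - s - 1) + 2 * s.
Proof. case: s => /= [m4 _ /(_ isT)|]; nia. Qed.

Section ComponentCount.
Variables (I : eqType) (m g : I -> nat) (s : I -> bool) (k : nat).

(* In the application [m i] is the size of the i-th component, [g i] its degree sum
   and [s i] whether it carries a kernel vector (making it bipartite). *)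
Definition component_bounds (l : seq I) := forall i, i \in l ->
  [/\ 4 <= m i, g i <= m i * (m i - 1) & (s i -> 2 * g i <= m i ^ 2)].

Lemma size_components_le1 (l : seq I) : component_bounds l ->
  \sum_(i <- l) g i = k * (k - 1) -> \sum_(i <- l) m i <= k + \sum_(i <- l) s i ->
  size l <= 1.
Proof.
(* With a_i = m_i - s_i >= 3, merging two components raises sum a_i (a_i - 1) by at
   least 18, far more than the 2 s_i gained per bipartite component. *)
move=> bnd sum_g sum_m; pose a i := m i - s i.
have a_ge3 : forall i, i \in l -> 3 <= a i.
  by move=> i /bnd[m4 _ _]; rewrite /a; case: (s i) => /=; lia.
have g_le : \sum_(i <- l) g i <= \sum_(i <- l) (a i * (a i - 1) + 2 * s i).
  rewrite big_seq_cond [leqRHS]big_seq_cond; apply: leq_sum.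
  by move=> i /andP[/bnd[m4 gi si] _]; apply: bipartite_shift_bound.
have m_eq : \sum_(i <- l) m i = \sum_(i <- l) a i + \sum_(i <- l) s i.
  rewrite -big_split big_seq_cond [RHS]big_seq_cond; apply: eq_bigr.
  by move=> i /andP[/bnd[m4 _ _] _]; rewrite /a; case: (s i) => /=; lia.
have s_le : \sum_(i <- l) s i <= size l.
  by rewrite -sum1_size; apply: leq_sum => i _; case: (s i).
have a_le : \sum_(i <- l) a i <= k by lia.
have aa_le : (\sum_(i <- l) a i) * (\sum_(i <- l) a i - 1) <= k * (k - 1).
  by apply: leq_mul => //; apply: leq_sub2r.
move: g_le; rewrite big_split -big_distrr /=.
have := sum_mulnB1_le a_ge3; lia.
Qed.

Lemma sum_component_sizes (l : seq I) : component_bounds l -> 4 < k ->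
  \sum_(i <- l) g i = k * (k - 1) ->
  k <= \sum_(i <- l) m i <= k + \sum_(i <- l) s i ->
  \sum_(i <- l) m i = k.
Proof.
move=> bnd k4 sum_g /andP[ge_k le_k]; have := size_components_le1 bnd sum_g le_k.
case: l bnd sum_g ge_k le_k => [|r [|//]] bnd; rewrite ?big_nil; first lia.
rewrite !big_seq1 => g_r ge_k le_k _.
have [m4 _ s_r] := bnd r (mem_head _ _).
case: (s r) s_r le_k => /= [/(_ isT) sq_r|_] le_k; last lia.
nia.
Qed.

End ComponentCount.

Section KernelSupport.
Variables (V : finType) (e : rel V).
Hypotheses (sym_e : symmetric e) (irr_e : irreflexive e).
Local Open Scope ring_scope.
Local Notation ker := (kermx (incidence e)).

Definition vcoord (u : 'rV[rat]_#|V|) (v : V) := u 0 (enum_rank v).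

Lemma kernel_coordN u x y : (u <= ker)%MS -> e x y -> vcoord u y = - vcoord u x.
Proof.
move=> /sub_kermxP uA exy; apply/eqP; rewrite -addr_eq0 addrC.
have Exy : [set x; y] \in edges e.
  by rewrite inE; apply/existsP; exists x; apply/existsP; exists y; rewrite exy eqxx.
move/matrixP: uA => /(_ 0 (enum_rank_in Exy [set x; y])).
rewrite !mxE (reindex (@enum_rank V)) /=; last first.
  by exists enum_val => i _; [rewrite enum_rankK | rewrite enum_valK].
under eq_bigr => v _ do rewrite mxE enum_rankK enum_rankK_in //.
have xy : x != y by apply: contraTneq exy => ->; rewrite irr_e.
rewrite (bigD1 x) // (bigD1 y) /=; last by rewrite eq_sym.
rewrite big1 ?set21 ?set22 ?mulr1 ?addr0 => [/eqP //|v /andP[vx vy]].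
by rewrite !inE (negbTE vx) (negbTE vy) mulr0.
Qed.

Lemma kernel_coord_eq0_connect u x y : (u <= ker)%MS -> connect e x y ->
  (vcoord u x == 0) = (vcoord u y == 0).
Proof.
move=> uK; apply: (@closed_connect _ e [pred v | vcoord u v == 0]) => v w evw.
by rewrite !inE (kernel_coordN uK evw) oppr_eq0.
Qed.

Definition ker_support (v : V) : bool := col (enum_rank v) ker != 0.

Lemma ker_supportP v :
  reflect (exists2 u, (u <= ker)%MS & vcoord u v != 0) (ker_support v).
Proof.
apply: (iffP idP) => [spv | [u /submxP[D ->]]].
  have [i Kiv] : exists i, ker i (enum_rank v) != 0.
    apply/existsP; apply: contraNT spv; rewrite negb_exists => /forallP K0.
    apply/eqP/matrixP => i j; rewrite mxE [RHS]mxE; apply/eqP.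
    by move: (K0 i); rewrite negbK.
  by exists (row i ker); [exact: row_sub | rewrite /vcoord mxE].
apply: contra => /eqP col0; rewrite /vcoord mxE; apply/eqP/big1 => i _.
by have := congr1 (fun M : 'cV_#|V| => M i 0) col0; rewrite !mxE => ->; rewrite mulr0.
Qed.

Lemma ker_eq0_on_roots u : (u <= ker)%MS ->
  (forall r, fingraph.root e r = r -> ker_support r -> vcoord u r = 0) -> u = 0.
Proof.
move=> uK u_roots; apply/rowP => i; rewrite mxE -[i]enum_valK.
set v := enum_val i; apply/eqP; apply: contraT => nz.
have rr : fingraph.root e (fingraph.root e v) = fingraph.root e v.
  exact/root_root/sym_connect_sym.
have nz_root : vcoord u (fingraph.root e v) != 0.
  by rewrite -(kernel_coord_eq0_connect uK (connect_root e v)).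
have sp_root : ker_support (fingraph.root e v) by apply/ker_supportP; exists u.
by rewrite (u_roots _ rr sp_root) eqxx in nz_root.
Qed.

Lemma corank_le_ker_support :
  (#|V| - \rank (incidence e) <= \sum_(r | fingraph.root e r == r) ker_support r)%N.
Proof.
pose S := [set r | (fingraph.root e r == r) && ker_support r].
pose P : 'M[rat]_(#|V|, #|S|) :=
  \matrix_(i, j) (if enum_val i == (enum_val j : V) then 1 else 0).
have uP u j : (u *m P) 0 j = vcoord u (enum_val j).
  rewrite mxE (reindex (@enum_rank V)) /=; last first.
    by exists enum_val => i _; [rewrite enum_rankK | rewrite enum_valK].
  rewrite (bigD1 (enum_val j : V)) //= big1 ?addr0.
    by rewrite mxE enum_rankK eqxx mulr1.
  by move=> w wj; rewrite mxE enum_rankK (negbTE wj) mulr0.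
have capP0 : \rank (ker :&: kermx P) = 0%N.
  apply/eqP; rewrite mxrank_eq0; apply/rowV0P => u.
  rewrite sub_capmx => /andP[uK /sub_kermxP uP0].
  apply: ker_eq0_on_roots => // r rr spr.
  have rS : r \in S by rewrite inE rr eqxx.
  by have := uP u (enum_rank_in rS r); rewrite uP0 enum_rankK_in // mxE.
rewrite -mxrank_ker -(mxrank_mul_ker _ P) capP0 addn0.
apply: (leq_trans (rank_leq_col _)).
rewrite -sum1_card big_mkcond [leqRHS]big_mkcond /=; apply/eq_leq/eq_bigr => r _.
by rewrite inE; case: (_ == r); case: ker_support.
Qed.

End KernelSupport.

Section Degrees.
Variables (V : finType) (e : rel V).
Hypotheses (sym_e : symmetric e) (irr_e : irreflexive e).

Definition deg (v : V) := #|[set w | e v w]|.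

Lemma edge_pairs x y : e x y ->
  [pred p : V * V | e p.1 p.2 && ([set p.1; p.2] == [set x; y])] =i pred2 (x, y) (y, x).
Proof.
move=> exy [a b] /=; apply/andP/orP => [[eab /eqP ab_xy] | [] /eqP[-> ->]].
- have ab : a != b by apply: contraTneq eab => ->; rewrite irr_e.
  have := set21 a b; have := set22 a b; rewrite ab_xy !inE.
  case/orP=> /eqP b_xy /orP[] /eqP a_xy; move: ab; rewrite a_xy b_xy ?eqxx //= => _.
  + by right.
  + by left.
- by rewrite exy.
- by rewrite sym_e exy setUC.
Qed.

Lemma sum_deg : \sum_v deg v = 2 * #|edges e|.
Proof.
have -> : \sum_v deg v = \sum_(p : V * V | e p.1 p.2) 1.
  rewrite -(pair_big_dep xpredT e (fun _ _ => 1)) /=; apply: eq_bigr => v _.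
  by rewrite /deg -sum1_card; apply: eq_bigl => w; rewrite inE.
rewrite (partition_big (fun p : V * V => [set p.1; p.2]) (mem (edges e))) /=;
  last first.
  move=> p epp; rewrite inE; apply/existsP; exists p.1; apply/existsP; exists p.2.
  by rewrite epp eqxx.
rewrite mulnC -sum_nat_const; apply: eq_bigr => E.
rewrite inE => /existsP[x /existsP[y /andP[exy /eqP ->]]].
have xy : x != y by apply: contraTneq exy => ->; rewrite irr_e.
rewrite (eq_bigl _ _ (edge_pairs exy)) sum1_card card2.
by rewrite xpair_eqE (negbTE xy).
Qed.

Let connect_sym_e : connect_sym e := sym_connect_sym sym_e.

Definition comp (r : V) : {set V} := [set v | fingraph.root e v == r].

Definition comp_deg (r : V) := \sum_(v in comp r) deg v.

Lemma comp_component r : fingraph.root e r = r -> comp r = component e r.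
Proof.
by move=> rr; apply/setP => v; rewrite !inE -{1}rr root_connect.
Qed.

Lemma sum_by_comp (F : V -> nat) :
  \sum_v F v = \sum_(r | fingraph.root e r == r) \sum_(v in comp r) F v.
Proof.
rewrite (partition_big (fingraph.root e) (fun r => fingraph.root e r == r)) /=.
  by apply: eq_bigr => r _; apply: eq_bigl => v; rewrite inE.
by move=> v _; rewrite root_root.
Qed.

Lemma neighbour_in_comp r v w : v \in comp r -> e v w -> w \in comp r.
Proof.
rewrite !inE => /eqP <- evw; rewrite root_connect // connect_sym_e.
exact: connect1.
Qed.

Lemma comp_deg_le r : comp_deg r <= #|comp r| * (#|comp r| - 1).
Proof.
rewrite /comp_deg -sum_nat_const; apply: leq_sum => v vC.
rewrite [#|comp r|](cardsD1 v) vC add1n subn1 /=.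
apply/subset_leq_card/subsetP => w; rewrite inE => evw.
rewrite in_setD1 (neighbour_in_comp vC evw) andbT.
by apply: contraTneq evw => ->; rewrite irr_e.
Qed.

Lemma bipartite_sum_deg (C : {set V}) (p : pred V) :
  (forall v w, v \in C -> e v w -> (w \in C) && (p w != p v)) ->
  2 * \sum_(v in C) deg v <= #|C| ^ 2.
Proof.
move=> alt; pose side b := [set v in C | p v == b].
have deg_le v : v \in C -> deg v <= #|side (~~ p v)|.
  move=> vC; apply/subset_leq_card/subsetP => w; rewrite !inE => evw.
  by have /andP[-> ] := alt v w vC evw; case: (p v); case: (p w).
have split F :
    \sum_(v in C) F v = \sum_(v in side true) F v + \sum_(v in side false) F v.
  rewrite (bigID p) /=; congr (_ + _);
    by apply: eq_bigl => v; rewrite !inE ?eqb_id ?eqbF_neg.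
have card_C : #|C| = #|side true| + #|side false|.
  by rewrite -!sum1_card split.
have sum_le : \sum_(v in C) deg v <= 2 * (#|side true| * #|side false|).
  rewrite split mul2n -addnn {2}mulnC -!sum_nat_const.
  apply: leq_add; apply: leq_sum => v; rewrite inE => /andP[vC /eqP pv];
    by have := deg_le v vC; rewrite pv.
have [am_gm _] := nat_Cauchy #|side true| #|side false|.
rewrite card_C sqrnD; lia.
Qed.

Lemma comp_deg_ker_support r : ker_support e r -> 2 * comp_deg r <= #|comp r| ^ 2.
Proof.
move=> /ker_supportP[u uK ur].
(* The sign of a kernel vector, nonzero on the whole component, 2-colours it. *)
apply: (bipartite_sum_deg (p := fun v => 0 < vcoord u v)%R) => v w vC evw.
rewrite (neighbour_in_comp vC evw) (kernel_coordN irr_e uK evw) oppr_gt0 /=.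
have v_r : connect e v r by move: vC; rewrite inE => /eqP <-; exact: connect_root.
have uv : (vcoord u v != 0)%R by rewrite (kernel_coord_eq0_connect irr_e uK v_r).
by rewrite lt_neqAle uv leNgt; case: (_ < _)%R.
Qed.

End Degrees.

Theorem lemma2 (V : finType) (e : rel V) (k : nat) :
  symmetric e -> irreflexive e ->
  4 < k ->
  (forall v : V, 4 <= #|component e v|) ->
  #|edges e| = 'C(k, 2) ->
  \rank (incidence e) = k ->
  #|V| = k.
Proof.
move=> sym_e irr_e k_gt4 comp_ge4 card_E rank_k.
have k_le : k <= #|V| by rewrite -rank_k rank_leq_row.
have corank := corank_le_ker_support sym_e irr_e; rewrite rank_k in corank.
have card_V : #|V| = \sum_(r | fingraph.root e r == r) #|comp e r|.
  by rewrite -sum1_card (sum_by_comp sym_e); apply: eq_bigr => r _; rewrite sum1_card.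
have sum_deg_k : \sum_(r | fingraph.root e r == r) comp_deg e r = k * (k - 1).
  by rewrite -(sum_by_comp sym_e) sum_deg // card_E -mul_bin_diag bin1 subn1.
rewrite -big_filter in corank; rewrite -big_filter in card_V.
rewrite -big_filter in sum_deg_k; rewrite card_V.
apply: (sum_component_sizes (m := fun r => #|comp e r|) (s := ker_support e)
          _ k_gt4 sum_deg_k); last by rewrite -card_V k_le -leq_subLR.
move=> r; rewrite mem_filter => /andP[/eqP rr _]; split.
- by rewrite comp_component // comp_ge4.
- exact: comp_deg_le.
- exact: comp_deg_ker_support.
Qed.
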